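(* For all $N\subseteq\mathbf{U}$, $w\in\mathbb{W}(N)$ and $i\in N$, we have $\bar v^\star_{w^{r^\star}_{-i}}=(\bar v^\star_w)_{-i}$.
   Context: $\mathbf{U}$ is a finite set of players; cardinalities of $N,S,B$ are $n,s,b$. $\Pi(N)$ is the set of partitions of $N$ ($\Pi(\emptyset)=\{\emptyset\}$). $p^\star$ is the Ewens distribution $p^\star_N(\pi)=\frac{\prod_{B\in\pi}(b-1)!}{n!}$. $\pi_{+i\leadsto B}=(\pi\setminus\{B\})\cup\{B\cup\{i\}\}$ for $B\in\pi$, $\pi_{+i\leadsto\emptyset}=\pi\cup\{\{i\}\}$. Embedded coalitions $\mathcal{E}(N)=\{(S,\pi):S\subseteq N,\pi\in\Pi(N\setminus S)\}$; a TUX game on $N$ is $w:\mathcal{E}(N)\to\mathbb{R}$ with $w(\emptyset,\pi)=0$; $\mathbb{W}(N)$ their set. The restriction operator $r^\star$: $w^{r^\star}_{-i}\in\mathbb{W}(N\setminus\{i\})$, $w^{r^\star}_{-i}(S,\pi)=\frac{1}{n-s}w(S,\pi_{+i\leadsto\emptyset})+\sum_{B\in\pi}\frac{b}{n-s}w(S,\pi_{+i\leadsto B})$ for $(S,\pi)\in\mathcal{E}(N\setminus\{i\})$. For $w\in\mathbb{W}(M)$, the average TU game $\bar v^\star_w$ on $M$ is $\bar v^\star_w(S)=\sum_{\pi\in\Pi(M\setminus S)}p^\star_{M\setminus S}(\pi)w(S,\pi)$ for $S\subseteq M$. For a TU game $v$ on $N$, $v_{-i}$ is its restriction to subsets of $N\setminus\{i\}$.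 *)

From mathcomp Require Import all_boot all_order all_algebra.
Set Implicit Arguments. Unset Strict Implicit. Unset Printing Implicit Defensive.
Import Order.TTheory GRing.Theory Num.Theory.
Local Open Scope ring_scope.

(* A partition of M is a P : {set {set T}} with [partition P M]
   (MathComp: blocks nonempty, pairwise disjoint, covering M);
   [partition set0 set0] holds, so Pi(emptyset) = {emptyset}. *)

Section Defs.
Variables (T : finType) (R : realFieldType).

Definition ewens (M : {set T}) (pi : {set {set T}}) : R :=
  (\prod_(B in pi) (#|B|.-1)`!)%:R / (#|M|)`!%:R.

Definition add_to_block (pi : {set {set T}}) (i : T) (B : {set T}) : {set {set T}} :=
  (pi :\ B) :|: [set B :|: [set i]].

Definition add_singleton (pi : {set {set T}}) (i : T) : {set {set T}} :=
  pi :|: [set [set i]].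

(* A TUX game on N is represented by a function on pairs (S, pi); only its
   values on embedded coalitions of N matter. *)
Definition is_TUX (N : {set T}) (w : {set T} -> {set {set T}} -> R) : Prop :=
  forall pi, partition pi N -> w set0 pi = 0.

Definition restr_star (N : {set T}) (w : {set T} -> {set {set T}} -> R) (i : T)
  : {set T} -> {set {set T}} -> R :=
  fun S pi =>
    w S (add_singleton pi i) / (#|N| - #|S|)%:R
    + \sum_(B in pi) (#|B|%:R / (#|N| - #|S|)%:R) * w S (add_to_block pi i B).

Definition avg_game (M : {set T}) (w : {set T} -> {set {set T}} -> R)
  (S : {set T}) : R :=
  \sum_(pi : {set {set T}} | partition pi (M :\: S)) ewens (M :\: S) pi * w S pi.

End Defs.

From mathcomp Require Import all_boot all_order all_algebra.
From mathcomp Require Import ring.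
Set Implicit Arguments. Unset Strict Implicit. Unset Printing Implicit Defensive.
Import Order.TTheory GRing.Theory Num.Theory.
Local Open Scope ring_scope.

(* Removing player i from a partition of (N \ S) yields a partition pi of
   (N \ S) \ {i} together with the block B of pi, or B = set0, that i joined;
   this is a bijection.  Under it the Ewens weight factors as
   p*(pi_{+i~>B}) = p*(pi) * max(b, 1) / (n - s), and max(b, 1) / (n - s) is
   exactly the weight r* gives to pi_{+i~>B}.  Averaging the restricted game
   over pi is therefore averaging w over the partitions of N \ S. *)

Section InsertPlayer.
Variable T : finType.
Implicit Types (D B C : {set T}) (pi P : {set {set T}}).

Lemma setD1_id (U : finType) (A : {set U}) a : a \notin A -> A :\ a = A.
Proof. by move=> aA; apply/setDidPl; rewrite disjoint_sym disjoints1. Qed.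

Lemma add_to_block_set0 pi i :
  set0 \notin pi -> add_to_block pi i set0 = add_singleton pi i.
Proof.
by move=> pi0; rewrite /add_to_block /add_singleton set0U setD1_id.
Qed.

Lemma partition_block_eq P D B C : partition P D -> B \in P -> C \in P ->
  B != set0 -> B \subset C -> B = C.
Proof.
move=> pP BP CP /set0Pn[x xB] sBC; apply/eqP; apply: contraT => neBC.
have := trivIsetP (partition_trivIset pP) _ _ BP CP neBC.
by move/disjointFr/(_ xB); rewrite (subsetP sBC).
Qed.

(* Inverse of (pi, B) |-> add_to_block pi i B, where B = set0 encodes
   add_singleton pi i (see add_to_block_set0). *)
Definition del_from_block (i : T) P : {set {set T}} * {set T} :=
  let B := pblock P i :\ i in
  ((P :\ pblock P i) :|: (if B == set0 then set0 else [set B]), B).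

Variables (i : T) (D : {set T}).
Hypothesis iD : i \notin D.

Lemma notin_block pi B : partition pi D -> B \in pi -> i \notin B.
Proof. by move=> pD BP; apply: contra iD; apply: (subsetP (partitionS pD BP)). Qed.

Lemma partition_add_to_block pi B : partition pi D -> B \in pi :|: [set set0] ->
  partition (add_to_block pi i B) (i |: D).
Proof.
move=> pD piB.
have [sBD pDB] : B \subset D /\ partition (pi :\ B) (D :\: B).
  case/setUP: piB => [BP|/set1P->].
    by split; [apply: partitionS pD BP | apply: partitionD1].
  by rewrite sub0set setD0 setD1_id ?(partition0 pD).
have -> : i |: D = (B :|: [set i]) :|: (D :\: B).
  apply/setP=> x; rewrite !inE; have := subsetP sBD x.
  by case: (x \in B); case: (x \in D); case: (x == i) => // ->.
rewrite /add_to_block setUC; apply: partitionU1 pDB _ _.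
  by apply/set0Pn; exists i; rewrite !inE eqxx orbT.
rewrite -setI_eq0; apply/eqP/setP=> x; rewrite !inE.
by case: (eqVneq x i) => [->|]; [rewrite (negbTE iD) !andbF | case: (x \in B)].
Qed.

Lemma del_from_blockK pi B : partition pi D -> B \in pi :|: [set set0] ->
  del_from_block i (add_to_block pi i B) = (pi, B).
Proof.
move=> pD piB; have pP := partition_add_to_block pD piB.
have iB : i \notin B by case/setUP: piB => [|/set1P->]; [apply: notin_block pD | rewrite inE].
have Bi_P : B :|: [set i] \in add_to_block pi i B by rewrite !inE eqxx orbT.
rewrite /del_from_block (def_pblock (partition_trivIset pP) Bi_P); last by rewrite !inE eqxx orbT.
have -> : (B :|: [set i]) :\ i = B by rewrite setUC setU1K.
have -> : add_to_block pi i B :\ (B :|: [set i]) = pi :\ B.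
  rewrite /add_to_block setUC setU1K // !inE negb_and; apply/orP; right.
  by apply: contra iD => /(notin_block pD); rewrite !inE eqxx orbT.
case: eqP => [->|/eqP nB]; first by rewrite setU0 setD1_id ?(partition0 pD).
by rewrite setUC setD1K //; case/setUP: piB => // /set1P eB; rewrite eB eqxx in nB.
Qed.

Lemma add_to_blockK P : partition P (i |: D) ->
  add_to_block (del_from_block i P).1 i (del_from_block i P).2 = P.
Proof.
move=> pP; have iP : i \in cover P by rewrite (cover_partition pP) setU11.
have CP := pblock_mem iP; have iC : i \in pblock P i by rewrite mem_pblock.
rewrite /del_from_block /add_to_block /=.
have -> : pblock P i :\ i :|: [set i] = pblock P i by rewrite setUC setD1K.
case: eqP => [B0|/eqP nB].
  by rewrite B0 setU0 setD1_id ?inE ?(partition0 pP) ?andbF // setUC setD1K.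
rewrite [P :\ _ :|: _]setUC setU1K; first by rewrite setUC setD1K.
apply/setD1P => -[neBC BP].
by rewrite (partition_block_eq pP BP CP nB (subD1set _ _)) eqxx in neBC.
Qed.

Lemma partition_del_from_block P : partition P (i |: D) ->
  partition (del_from_block i P).1 D
  && ((del_from_block i P).2 \in (del_from_block i P).1 :|: [set set0]).
Proof.
move=> pP; have iP : i \in cover P by rewrite (cover_partition pP) setU11.
have CP := pblock_mem iP; have iC : i \in pblock P i by rewrite mem_pblock.
set C := pblock P i in CP iC *; have pPC := partitionD1 pP CP.
have DE : (C :\ i) :|: ((i |: D) :\: C) = D.
  apply/setP=> x; rewrite !inE; have := subsetP (partitionS pP CP) x; rewrite !inE.
  case: (eqVneq x i) => [->|_] /=; first by rewrite iC (negbTE iD).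
  by case: (x \in C) => //= ->.
rewrite /del_from_block /=; case: eqP => [B0|/eqP nB].
  by rewrite B0 setU0 !inE eqxx orbT andbT -DE B0 set0U.
apply/andP; split; last by rewrite !inE eqxx orbT.
rewrite setUC -DE; apply: partitionU1 pPC nB _.
rewrite -setI_eq0; apply/eqP/setP=> x; rewrite !inE.
by case: (x \in C); rewrite ?andbF.
Qed.

Lemma big_partition_setU1 (V : Type) (idx : V) (op : Monoid.com_law idx)
    (F : {set {set T}} -> V) :
  \big[op/idx]_(P | partition P (i |: D)) F P =
  \big[op/idx]_(pi | partition pi D)
     \big[op/idx]_(B in pi :|: [set set0]) F (add_to_block pi i B).
Proof.
rewrite pair_big_dep /= (reindex_onto (fun p => add_to_block p.1 i p.2) (del_from_block i)) /=;
  last exact: add_to_blockK.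
apply: eq_bigl => -[pi B] /=; apply/andP/andP => [[pP /eqP E]|[pD piB]].
  by have := partition_del_from_block pP; rewrite E => /andP.
by split; [exact: partition_add_to_block | rewrite del_from_blockK].
Qed.

Variable R : realFieldType.

Lemma fact_cardsU1 : (#|i |: D|`!)%:R = #|i |: D|%:R * (#|D|`!)%:R :> R.
Proof. by rewrite cardsU1 iD factS natrM. Qed.

Lemma ewens_add_singleton pi : partition pi D ->
  ewens R (i |: D) (add_singleton pi i) = ewens R D pi / #|i |: D|%:R.
Proof.
move=> pD; rewrite /ewens /add_singleton setUC big_setU1 /=; last first.
  by apply/negP => /(notin_block pD); rewrite inE eqxx.
by rewrite cards1 fact0 mul1n fact_cardsU1 invfM mulrCA mulrC.
Qed.

Lemma ewens_add_to_block pi B : partition pi D -> B \in pi ->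
  ewens R (i |: D) (add_to_block pi i B) = ewens R D pi * #|B|%:R / #|i |: D|%:R.
Proof.
move=> pD BP; rewrite /ewens /add_to_block setUC big_setU1 /=; last first.
  by apply/setD1P => -[_ /(notin_block pD)]; rewrite !inE eqxx orbT.
have b_gt0 : (0 < #|B|)%N by rewrite card_gt0 (partition_neq0 pD BP).
rewrite (big_setD1 B BP) /= setUC cardsU1 (notin_block pD BP) add1n /=.
rewrite -{1}(prednK b_gt0) factS prednK // fact_cardsU1 !natrM.
by rewrite invfM; ring.
Qed.

Lemma ewens_restr_star (N S : {set T}) (w : {set T} -> {set {set T}} -> R) pi :
    S \subset N -> N :\: S = i |: D -> partition pi D ->
  ewens R D pi * restr_star N w i S pi =
  \sum_(B in pi :|: [set set0])
     ewens R (i |: D) (add_to_block pi i B) * w S (add_to_block pi i B).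
Proof.
move=> sSN NS pD; rewrite /restr_star.
have -> : (#|N| - #|S|)%:R = #|i |: D|%:R :> R by rewrite -NS cardsD (setIidPr sSN).
rewrite [RHS](bigD1 set0) ?inE ?eqxx ?orbT //= mulrDr; congr (_ + _).
  by rewrite add_to_block_set0 ?(partition0 pD) // ewens_add_singleton // mulrA mulrAC.
rewrite big_distrr /=; apply: eq_big => [B|B BP]; last first.
  by rewrite ewens_add_to_block // !mulrA.
by rewrite !inE; case: eqVneq => [->|]; rewrite ?(partition0 pD) ?orbF ?andbT.
Qed.
End InsertPlayer.

Theorem lemma2 (T : finType) (R : realFieldType) (N : {set T})
  (w : {set T} -> {set {set T}} -> R) (i : T) :
  is_TUX N w -> i \in N ->
  forall S : {set T}, S \subset N :\ i ->
    avg_game (N :\ i) (restr_star N w i) S = avg_game N w S.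
Proof.
move=> _ iN S sS.
have iS : i \notin S by apply/negP => /(subsetP sS); rewrite !inE eqxx.
set D := N :\ i :\: S.
have iD : i \notin D by rewrite /D !inE eqxx andbF.
have NS : N :\: S = i |: D.
  by apply/setP=> x; rewrite !inE; case: eqVneq => [->|] //=; rewrite iS iN.
rewrite /avg_game NS (big_partition_setU1 iD); apply: eq_bigr => pi pD.
exact: ewens_restr_star (subset_trans sS (subD1set N i)) NS pD.
Qed.
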